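(* Let $t\ge 2$, $m\ge 1$ and $k_1,\dots,k_t\ge 2$ be integers. If a finite simple graph $G$ contains an induced subgraph isomorphic to the vertex-disjoint union $P_{k_1}\cup\cdots\cup P_{k_t}\cup mP_1$ of paths on $k_1,\dots,k_t$ vertices and $m$ isolated vertices, then \[\mathrm{mur}(G)\ge \Big(\sum_{i=1}^t k_i\Big)-t.\]
   Context: For a finite simple undirected graph $G$ on vertices $v_1,\dots,v_n$, let $A_G$ be its $(0,1)$-adjacency matrix, $D_G=\mathrm{diag}(d_1,\dots,d_n)$ with $d_i$ the degree of $v_i$, $I$ the $n\times n$ identity matrix and $J$ the $n\times n$ all-ones matrix. A universal adjacency matrix of $G$ is any matrix $\alpha A_G+\beta I+\gamma J+\delta D_G$ with real scalars $\alpha,\beta,\gamma,\delta$ and $\alpha\neq 0$. The minimum universal rank $\mathrm{mur}(G)$ is the minimum rank over all universal adjacency matrices of $G$. *)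

From HB Require Import structures.
From mathcomp Require Import all_boot all_order all_algebra.
From mathcomp Require Import boolp reals.
Set Implicit Arguments. Unset Strict Implicit. Unset Printing Implicit Defensive.
Import Order.TTheory GRing.Theory Num.Theory.

Definition simple_graph (n : nat) (G : rel 'I_n) : Prop :=
  symmetric G /\ irreflexive G.

Local Open Scope ring_scope.

Section Mats.
Variable R : realType.

Definition adjmx (n : nat) (G : rel 'I_n) : 'M[R]_n :=
  \matrix_(i, j) (G i j)%:R.

Definition degmx (n : nat) (G : rel 'I_n) : 'M[R]_n :=
  \matrix_(i, j) ((i == j)%:R * (#|[pred k | G i k]|)%:R).

Definition Jmx (n : nat) : 'M[R]_n := const_mx 1.

Definition univ_adj (n : nat) (G : rel 'I_n) (a b c d : R) : 'M[R]_n :=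
  a *: adjmx G + b%:M + c *: Jmx n + d *: degmx G.

Definition attained_rank (n : nat) (G : rel 'I_n) (r : nat) : bool :=
  `[< exists a b c d : R, a != 0 /\ \rank (univ_adj G a b c d) = r >].

Lemma attained_rank_ex (n : nat) (G : rel 'I_n) : exists r, attained_rank G r.
Proof.
exists (\rank (univ_adj G 1 0 0 0)); apply/asboolP.
by exists 1, 0, 0, 0; split; [exact: oner_neq0|].
Qed.

Definition mur (n : nat) (G : rel 'I_n) : nat := ex_minn (attained_rank_ex G).
End Mats.

Local Close Scope ring_scope.

(* Vertex-disjoint union of paths with s_1, ..., s_r vertices, on vertex set
   'I_(sumn s): consecutive blocks of sizes s_1, ..., s_r, each block a path
   in the natural order. *)
Definition block_starts (s : seq nat) : seq nat :=
  [seq sumn (take i s) | i <- iota 0 (size s)].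

Definition linforest (s : seq nat) : rel 'I_(sumn s) :=
  fun u v => ((u.+1 == v :> nat) || (v.+1 == u :> nat))
             && (maxn u v \notin block_starts s).

Definition paths_union (ks : seq nat) (m : nat) := @linforest (ks ++ nseq m 1).

Definition induced_sub (N n : nat) (H : rel 'I_N) (G : rel 'I_n) : Prop :=
  exists f : 'I_N -> 'I_n, injective f /\ forall u v, G (f u) (f v) = H u v.
Arguments linforest s u v : clear implicits.
Arguments paths_union ks m u v : clear implicits.

From mathcomp Require Import all_boot all_order all_algebra.
From mathcomp Require Import boolp reals.
From mathcomp Require Import ring zify.
Set Implicit Arguments. Unset Strict Implicit. Unset Printing Implicit Defensive.
Import Order.TTheory GRing.Theory Num.Theory.

(* Let w be an isolated vertex of the induced linear forest and let v_1 < ... < v_r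
   be the upper ends of its edges {v_i - 1, v_i}.  In any universal adjacency
   matrix M = aA + bI + cJ + dD, the r x r submatrix with rows
   M_(v_i - 1) - M_w and columns v_j has entries
   a [v_i - 1 ~ v_j] + (b + d deg(v_i - 1)) [v_i - 1 = v_j]:
   the J-part cancels, and w contributes nothing else.  Since the forest only has
   edges between consecutive vertices, this submatrix is lower triangular with
   diagonal a != 0, so rank M >= r = (number of vertices) - (number of paths). *)

Definition pred_ord (N : nat) (v : 'I_N) : 'I_N :=
  Ordinal (leq_ltn_trans (leq_pred v) (ltn_ord v)).

Definition consecutive_edges (N : nat) (H : rel 'I_N) : {pred 'I_N} :=
  [pred v : 'I_N | (0 < v)%N && H (pred_ord v) v].

Lemma leq_enum_val (N : nat) (S : {pred 'I_N}) :
  {mono (fun i : 'I_#|S| => val (Order.enum_val i)) : i j / (i <= j)%N}.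
Proof. exact: Order.EnumVal.le_enum_val (@le_total _ 'I_N) S. Qed.

Lemma ltn_enum_val (N : nat) (S : {pred 'I_N}) :
  {mono (fun i : 'I_#|S| => val (Order.enum_val i)) : i j / (i < j)%N}.
Proof. exact: leW_mono (Order.EnumVal.le_enum_val (@le_total _ 'I_N) (A:=S)). Qed.

Local Open Scope ring_scope.

Lemma mxrank_colsub_rowsubB (F : fieldType) (m n p q : nat) (M : 'M[F]_(m, n))
    (r1 r2 : 'I_p -> 'I_m) (c : 'I_q -> 'I_n) :
  (\rank (colsub c (rowsub r1 M - rowsub r2 M)) <= \rank M)%N.
Proof.
rewrite (_ : colsub _ _ = (rowsub r1 1%:M - rowsub r2 1%:M) *m M *m colsub c 1%:M).
  exact: leq_trans (mxrankM_maxl _ _) (mxrankM_maxr _ _).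
by rewrite mulmx_colsub mulmx1 mulmxBl -!rowsubE.
Qed.

Lemma univ_adjE (R : realType) (n : nat) (G : rel 'I_n) (a b c d : R) (x y : 'I_n) :
  univ_adj G a b c d x y =
  a * (G x y)%:R + (x == y)%:R * (b + d * (#|[pred k | G x k]|)%:R) + c.
Proof. by rewrite !mxE; case: (x == y); rewrite /= ?mulr1n ?mulr0n; ring. Qed.

Section ConsecutiveEdgesRank.

Variables (R : realType) (n N : nat) (G : rel 'I_n) (H : rel 'I_N).
Variables (f : 'I_N -> 'I_n) (w : 'I_N) (a b c d : R).
Hypothesis a_neq0 : a != 0.
Hypothesis f_inj : injective f.
Hypothesis f_induced : forall u v, G (f u) (f v) = H u v.
Hypothesis H_sym : symmetric H.
Hypothesis w_isolated : forall v, H w v = false.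
Hypothesis H_consecutive :
  forall u v, H u v -> (u.+1 == v :> nat) || (v.+1 == u :> nat).

Let M := univ_adj G a b c d.
Let E := consecutive_edges H.
Let e (i : 'I_#|E|) : 'I_N := Order.enum_val i.
Let L := colsub (f \o e) (rowsub (f \o @pred_ord N \o e) M - rowsub (fun=> f w) M).

Lemma consecutive_edges_neq_isolated v : v \in E -> v != w.
Proof.
case/andP=> _ Hv; apply: contraTneq Hv => ->.
by rewrite H_sym w_isolated.
Qed.

Lemma univ_adj_induced_subB u v : v != w ->
  M (f u) (f v) - M (f w) (f v) =
  a * (H u v)%:R + (u == v)%:R * (b + d * (#|[pred k | G (f u) k]|)%:R).
Proof.
move=> vw; rewrite /M !univ_adjE !f_induced w_isolated !(inj_eq f_inj).
by rewrite [w == v]eq_sym (negbTE vw) mulr0 mul0r !add0r addrK.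
Qed.

Lemma edge_submx_upper_entry (i j : 'I_#|E|) :
  (i <= j)%N -> L i j = a * (i == j)%:R.
Proof.
move=> le_ij; have ei_in : e i \in E := Order.EnumVal.enum_valP i.
have ej_in : e j \in E := Order.EnumVal.enum_valP j.
have le_eij : (e i <= e j)%N by move: le_ij; rewrite -(@leq_enum_val _ E).
have -> : L i j = M (f (pred_ord (e i))) (f (e j)) - M (f w) (f (e j)) by rewrite !mxE.
rewrite univ_adj_induced_subB ?consecutive_edges_neq_isolated //.
have /andP[ei_gt0 Hei] := ei_in.
have -> : (pred_ord (e i) == e j) = false by apply/negbTE; rewrite -val_eqE /=; lia.
rewrite mul0r addr0; have [<-|neq_ij] := eqVneq i j; first by rewrite Hei.
have lt_ij : (i < j)%N by rewrite ltn_neqAle val_eqE neq_ij.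
have lt_eij : (e i < e j)%N by move: lt_ij; rewrite -(@ltn_enum_val _ E).
suff -> : H (pred_ord (e i)) (e j) = false by [].
apply: contraTF lt_eij => /H_consecutive /=; move: ei_gt0.
by move: (val (e i)) (val (e j)) => x y; lia.
Qed.

Lemma consecutive_edges_le_rank : (#|E| <= \rank M)%N.
Proof.
have L_trig : is_trig_mx L.
  apply/is_trig_mxP => i j lt_ij.
  by rewrite edge_submx_upper_entry ?(ltnW lt_ij) // -val_eqE ltn_eqF ?mulr0.
have L_unit : L \in unitmx.
  rewrite unitmxE (det_trig L_trig) unitfE prodf_seq_neq0.
  by apply/allP => i _; rewrite edge_submx_upper_entry // eqxx mulr1.
by rewrite -(mxrank_unit L_unit) mxrank_colsub_rowsubB.
Qed.

End ConsecutiveEdgesRank.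

Local Close Scope ring_scope.

Lemma linforest_sym (s : seq nat) : symmetric (linforest s).
Proof. by move=> u v; rewrite /linforest orbC maxnC. Qed.

Lemma linforest_consecutive (s : seq nat) (u v : 'I_(sumn s)) :
  linforest s u v -> (u.+1 == v :> nat) || (v.+1 == u :> nat).
Proof. by case/andP. Qed.

Lemma in_consecutive_edges_linforest (s : seq nat) (v : 'I_(sumn s)) :
  (v \in consecutive_edges (linforest s)) = (0 < v) && (val v \notin block_starts s).
Proof.
rewrite inE /linforest /=; case: (posnP v) => [//|v_gt0].
by rewrite (prednK v_gt0) eqxx (maxn_idPr (leq_pred v)).
Qed.

Lemma card_ord_gt0 (N : nat) : #|[pred v : 'I_N | 0 < v]| = N.-1.
Proof.
case: N => [|N] /=; first by apply: eq_card0 => -[].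
transitivity #|predC1 (@ord0 N)|; last by rewrite cardC1 card_ord.
by apply: eq_card => v; rewrite !inE -val_eqE lt0n.
Qed.

Lemma size_block_starts (s : seq nat) : size (block_starts s) = size s.
Proof. by rewrite size_map size_iota. Qed.

Lemma linforest_edges_ge (s : seq nat) :
  sumn s - size s <= #|consecutive_edges (linforest s)|.
Proof.
case: s => [//|k s']; set s := k :: s'.
pose starts := [pred v : 'I_(sumn s) | val v \in block_starts s].
have starts_le : #|[predI [pred v : 'I_(sumn s) | 0 < v] & starts]| <= (size s).-1.
  rewrite -(size_block_starts s) -size_behead cardE -(size_map val).
  apply: uniq_leq_size; first by rewrite (map_inj_uniq val_inj) enum_uniq.
  move=> x /mapP[v]; rewrite mem_enum !inE => /andP[v_gt0 v_start] ->.
  by move: v_start; rewrite /block_starts /= => /orP[/eqP v0|]; first by rewrite v0 in v_gt0.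
have := cardID starts [pred v : 'I_(sumn s) | 0 < v]; rewrite card_ord_gt0.
rewrite (eq_card (@in_consecutive_edges_linforest s)).
rewrite (@eq_card _ _ [predD [pred v : 'I_(sumn s) | 0 < v] & starts]); last first.
  by move=> v; rewrite !inE andbC.
move: starts_le; rewrite /s /=.
by move: #|[predI _ & _]| #|[predD _ & _]| => x y; lia.
Qed.

Lemma last_in_block_starts (s : seq nat) :
  last 0 s = 1 -> (sumn s).-1 \in block_starts s.
Proof.
case/lastP: s => [//|s k]; rewrite last_rcons => ->.
apply/mapP; exists (size s); first by rewrite mem_iota size_rcons ltnSn.
by rewrite -cats1 take_size_cat // sumn_cat addn1.
Qed.

Lemma linforest_isolated (s : seq nat) (w : 'I_(sumn s)) :
  w.+1 = sumn s -> val w \in block_starts s -> forall v, linforest s w v = false.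
Proof.
move=> w_last w_start v; rewrite /linforest.
have := ltn_ord v; case: eqP => [<-|_ _] /=; first by rewrite w_last ltnn.
by case: eqP => //= vw; rewrite (maxn_idPl _) ?w_start // -vw leqnSn.
Qed.

Theorem lemma9 (R : realType) (n : nat) (G : rel 'I_n) (ks : seq nat) (m : nat) :
  simple_graph G ->
  (2 <= size ks)%N -> (1 <= m)%N -> all (fun k => 2 <= k)%N ks ->
  induced_sub (paths_union ks m) G ->
  (sumn ks - size ks <= mur R G)%N.
Proof.
move=> _ _ m_gt0 _ [f [f_inj f_induced]].
rewrite /mur; case: ex_minnP => r /asboolP[a [b [c [d [a_neq0 <-]]]]] _.
move: f f_inj f_induced; rewrite /paths_union; set s := ks ++ nseq m 1.
move=> f f_inj f_induced.
have sumn_s : sumn s = sumn ks + m by rewrite sumn_cat sumn_nseq mul1n.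
have last_s : last 0 s = 1.
  by rewrite /s last_cat; case: (m) m_gt0 => // m' _ /=; elim: m'.
have w_last : (sumn s).-1.+1 = sumn s by rewrite prednK // sumn_s addn_gt0 m_gt0 orbT.
have w_lt : (sumn s).-1 < sumn s by rewrite w_last.
pose w := Ordinal w_lt.
have w_isolated := @linforest_isolated s w w_last (last_in_block_starts last_s).
apply: leq_trans (consecutive_edges_le_rank b c d a_neq0 f_inj f_induced
  (@linforest_sym s) w_isolated (@linforest_consecutive s)).
by apply: leq_trans (linforest_edges_ge s); rewrite sumn_s size_cat size_nseq subnDr.
Qed.
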